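(* Let $\mathcal{H}_\mathrm{S}$ (system) and $\mathcal{H}_\mathrm{B}$ (bath) be finite-dimensional Hilbert spaces, $d_\mathrm{B}=\dim\mathcal{H}_\mathrm{B}$, and fix an orthonormal basis $\{|k\rangle\}_{k=1}^{d_\mathrm{B}}$ of $\mathcal{H}_\mathrm{B}$. Let $\mathcal{C}\subseteq\mathcal{H}_\mathrm{S}$ be a subspace (the code) with orthogonal projector $P_\mathcal{C}$. Let $\mathcal{E}$ be a completely positive trace-preserving (CPTP) map on operators on $\mathcal{H}_\mathrm{S}\otimes\mathcal{H}_\mathrm{B}$ with Kraus operators $\{E_a\}_{a=1}^N$. Then $\mathcal{E}$ is perfectly correctable on $\mathcal{C}$ with a CPTP recovery of the form $\mathcal{R}=\mathcal{R}_\mathrm{S}\otimes\mathrm{id}_\mathrm{B}$ if and only if there is a complex matrix $\Lambda$, indexed by triples, which is Hermitian (i.e. $\Lambda_{bmn,ak\ell}=(\Lambda_{ak\ell,bmn})^*$), such that $$P_\mathcal{C}\, E_{a;k\ell}^\dagger E_{b;mn}\,P_\mathcal{C}=\Lambda_{ak\ell,bmn}\,P_\mathcal{C}$$ for all $a,b\in\{1,\dots,N\}$ and all $k,\ell,m,n\in\{1,\dots,d_\mathrm{B}\}$.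
   Context: For an operator $O$ on $\mathcal{H}_\mathrm{S}\otimes\mathcal{H}_\mathrm{B}$, $O_{;k\ell}\equiv\langle k|O|\ell\rangle$ denotes the system operator obtained by taking the partial matrix element in the bath basis, and $O_{;k\ell}^\dagger\equiv(O_{;k\ell})^\dagger$. Let $P=P_\mathcal{C}\otimes\mathbb{1}_\mathrm{B}$. A code state is any density operator $\rho$ on $\mathcal{H}_\mathrm{S}\otimes\mathcal{H}_\mathrm{B}$ with $\rho=P\rho P$ (i.e. supported on $\mathcal{C}\otimes\mathcal{H}_\mathrm{B}$). A recovery is a CPTP map $\mathcal{R}=\mathcal{R}_\mathrm{S}\otimes\mathrm{id}_\mathrm{B}$, where $\mathcal{R}_\mathrm{S}$ is a CPTP map on operators on $\mathcal{H}_\mathrm{S}$ whose outputs are supported on $\mathcal{C}$ (i.e. $\mathcal{R}_\mathrm{S}=P_\mathcal{C}\mathcal{R}_\mathrm{S}(\cdot)P_\mathcal{C}$). $\mathcal{E}$ is perfectly correctable on $\mathcal{C}$ with recovery $\mathcal{R}$ if $\mathrm{Tr}_\mathrm{B}\{(\mathcal{R}\circ\mathcal{E})(\rho)\}=\mathrm{Tr}_\mathrm{B}\{\rho\}$ for every code state $\rho$. *)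

(* Operators on H_S (dim dS) are dS x dS complex matrices;
   operators on H_S (x) H_B are (dS*dB) x (dS*dB) matrices, the product basis
   |i>|k> being indexed by mxtens_index (i, k) (mathcomp real_closed mxtens). *)
From mathcomp Require Import all_boot all_algebra.
From mathcomp Require Import reals.
From mathcomp.real_closed Require Import complex mxtens.
Set Implicit Arguments. Unset Strict Implicit. Unset Printing Implicit Defensive.
Import GRing.Theory Num.Theory.
Local Open Scope ring_scope.

Section QEC.
Variable C : numClosedFieldType.

Definition dag {m n} (A : 'M[C]_(m, n)) : 'M[C]_(n, m) := (map_mx Num.conj A)^T.

Definition psdmx {n} (A : 'M[C]_n) : Prop :=
  forall v : 'cV[C]_n, 0 <= (dag v *m A *m v) 0 0.

Definition density {n} (rho : 'M[C]_n) : Prop := psdmx rho /\ \tr rho = 1.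

Definition orth_proj {n} (P : 'M[C]_n) : Prop := P *m P = P /\ dag P = P.

(* partial matrix element O_{;kl} = <k| O |l> in the bath basis *)
Definition bath_elem {dS dB} (O : 'M[C]_(dS * dB)) (k l : 'I_dB) : 'M[C]_dS :=
  \matrix_(i, j) O (mxtens_index (i, k)) (mxtens_index (j, l)).

Definition ptraceB {dS dB} (O : 'M[C]_(dS * dB)) : 'M[C]_dS :=
  \sum_(k < dB) bath_elem O k k.

Definition kraus_apply {n N} (K : 'I_N -> 'M[C]_n) (rho : 'M[C]_n) : 'M[C]_n :=
  \sum_(a < N) K a *m rho *m dag (K a).

Definition kraus_TP {n N} (K : 'I_N -> 'M[C]_n) : Prop :=
  \sum_(a < N) dag (K a) *m K a = 1%:M.

Definition CPTP {n} (Phi : 'M[C]_n -> 'M[C]_n) : Prop :=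
  exists (M : nat) (K : 'I_M -> 'M[C]_n),
    kraus_TP K /\ forall X, Phi X = kraus_apply K X.

(* R_S (x) id_B : acts blockwise, (R_S (x) id)(O)_{;kl} = R_S(O_{;kl}) *)
Definition lift_sys {dS dB} (RS : 'M[C]_dS -> 'M[C]_dS) (O : 'M[C]_(dS * dB))
  : 'M[C]_(dS * dB) :=
  \matrix_(p, q) RS (bath_elem O (mxtens_unindex p).2 (mxtens_unindex q).2)
                    (mxtens_unindex p).1 (mxtens_unindex q).1.

Definition code_state {dS dB} (PC : 'M[C]_dS) (rho : 'M[C]_(dS * dB)) : Prop :=
  density rho /\
  rho = (tensmx PC (1%:M : 'M[C]_dB)) *m rho *m (tensmx PC (1%:M : 'M[C]_dB)).

Definition sys_recovery {dS} (PC : 'M[C]_dS) (RS : 'M[C]_dS -> 'M[C]_dS) : Prop :=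
  CPTP RS /\ forall X, RS X = PC *m RS X *m PC.

Definition perfectly_correctable {dS dB N} (PC : 'M[C]_dS)
  (E : 'I_N -> 'M[C]_(dS * dB)) (RS : 'M[C]_dS -> 'M[C]_dS) : Prop :=
  forall rho : 'M[C]_(dS * dB), code_state PC rho ->
    ptraceB (lift_sys RS (kraus_apply E rho)) = ptraceB rho.

End QEC.

From mathcomp Require Import all_boot all_order all_algebra.
From mathcomp Require Import reals ring.
From mathcomp.real_closed Require Import complex mxtens.
Set Implicit Arguments. Unset Strict Implicit. Unset Printing Implicit Defensive.
Import Order.TTheory GRing.Theory Num.Theory.
Local Open Scope ring_scope.

(* Necessity: correctability on the code states psi psi^dag (x) |l><l| says
   that the Kraus operators K_r E_{a;kl} of the recovered channel fix every
   pure code state, hence, by polarization, every code operator X.  Then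
   sum_t [M_t, X] [M_t, X]^dag = 0 for M_t = K_r E_{a;kl} P, so M_t commutes
   with all code operators and equals c_t P; with sum_r K_r^dag K_r = 1 this
   gives Lambda = sum_r c^* c.
   Sufficiency: the F = E_{a;kl} P have Gram matrix Lambda (x) P.  Diagonalizing
   Lambda yields G_r with G_r^dag G_s = delta_rs d_r P, and the Kraus operators
   d_r^{-1/2} P G_r^dag, completed to a trace-preserving family, map
   F_i X F_j^dag to Lambda_ji X for code operators X.  Trace preservation of E
   gives sum_{k,a} Lambda_{akn,akm} = delta_nm: the reduced state is recovered. *)

Section Adjoint.
Variable C : numClosedFieldType.

Lemma dagK m n (A : 'M[C]_(m, n)) : dag (dag A) = A.
Proof. by apply/matrixP => i j; rewrite !mxE conjCK. Qed.

Lemma dagM m n p (A : 'M[C]_(m, n)) (B : 'M[C]_(n, p)) :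
  dag (A *m B) = dag B *m dag A.
Proof. by rewrite /dag map_mxM trmx_mul. Qed.

Lemma dagD m n (A B : 'M[C]_(m, n)) : dag (A + B) = dag A + dag B.
Proof. by apply/matrixP => i j; rewrite !mxE rmorphD. Qed.

Lemma dagB m n (A B : 'M[C]_(m, n)) : dag (A - B) = dag A - dag B.
Proof. by apply/matrixP => i j; rewrite !mxE rmorphB. Qed.

Lemma dagZ m n c (A : 'M[C]_(m, n)) : dag (c *: A) = c^* *: dag A.
Proof. by apply/matrixP => i j; rewrite !mxE rmorphM. Qed.

Lemma dag_sum m n (I : finType) (F : I -> 'M[C]_(m, n)) :
  dag (\sum_i F i) = \sum_i dag (F i).
Proof.
apply/matrixP => i j; rewrite !mxE !summxE rmorph_sum.
by apply: eq_bigr => k _; rewrite !mxE.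
Qed.

Lemma dag0 m n : dag (0 : 'M[C]_(m, n)) = 0.
Proof. by apply/matrixP => i j; rewrite !mxE conjC0. Qed.

Lemma dag1 n : dag (1%:M : 'M[C]_n) = 1%:M.
Proof. by apply/matrixP => i j; rewrite !mxE eq_sym conjC_nat. Qed.

Lemma dag_delta m n (i : 'I_m) (j : 'I_n) :
  dag (delta_mx i j : 'M[C]_(m, n)) = delta_mx j i.
Proof. by apply/matrixP => a b; rewrite !mxE conjC_nat andbC. Qed.

Lemma dag_tens m n p q (A : 'M[C]_(m, n)) (B : 'M[C]_(p, q)) :
  dag (tensmx A B) = tensmx (dag A) (dag B).
Proof. by apply/matrixP => i j; rewrite !mxE rmorphM. Qed.

Lemma mxtrace_mul_dag m n (A : 'M[C]_(m, n)) :
  \tr (A *m dag A) = \sum_i \sum_j A i j * (A i j)^*.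
Proof.
by apply: eq_bigr => i _; rewrite mxE; apply: eq_bigr => j _; rewrite !mxE.
Qed.

Lemma mxtrace_mul_dag_ge0 m n (A : 'M[C]_(m, n)) : 0 <= \tr (A *m dag A).
Proof.
by rewrite mxtrace_mul_dag; do 2![apply: sumr_ge0 => ? _]; apply: mul_conjC_ge0.
Qed.

Lemma mxtrace_mul_dag_eq0 m n (A : 'M[C]_(m, n)) : (\tr (A *m dag A) == 0) = (A == 0).
Proof.
apply/eqP/eqP => [|->]; last by rewrite mul0mx mxtrace0.
have Aij_ge0 i j : 0 <= A i j * (A i j)^* by apply: mul_conjC_ge0.
rewrite mxtrace_mul_dag => /psumr_eq0P.
move=> /(_ (fun i _ => sumr_ge0 _ (fun j _ => Aij_ge0 i j))) A0.
apply/matrixP => i j; apply/eqP; rewrite mxE -mul_conjC_eq0.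
by rewrite (psumr_eq0P (fun j _ => Aij_ge0 i j) (A0 i _)).
Qed.

Lemma mxtrace_mul_dag_gt0 m n (A : 'M[C]_(m, n)) : (0 < \tr (A *m dag A)) = (A != 0).
Proof. by rewrite lt_def mxtrace_mul_dag_ge0 mxtrace_mul_dag_eq0 andbT. Qed.

Lemma sum_mul_dag_eq0 m n (I : finType) (F : I -> 'M[C]_(m, n)) :
  \sum_i F i *m dag (F i) = 0 -> forall i, F i = 0.
Proof.
move=> /(congr1 mxtrace); rewrite mxtrace0 raddf_sum.
move=> /(psumr_eq0P (fun i _ => mxtrace_mul_dag_ge0 (F i))) F0 i.
by apply/eqP; rewrite -mxtrace_mul_dag_eq0 F0.
Qed.

End Adjoint.

Section KrausMap.
Variables (C : numClosedFieldType) (n : nat) (T : finType).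
Implicit Types X Y : 'M[C]_n.

Definition kraus_map (K : T -> 'M[C]_n) X : 'M[C]_n := \sum_t K t *m X *m dag (K t).

Variable K : T -> 'M[C]_n.

Lemma kraus_mapD X Y : kraus_map K (X + Y) = kraus_map K X + kraus_map K Y.
Proof. by rewrite -big_split; apply: eq_bigr => t _; rewrite mulmxDr mulmxDl. Qed.

Lemma kraus_mapZ c X : kraus_map K (c *: X) = c *: kraus_map K X.
Proof.
by rewrite scaler_sumr; apply: eq_bigr => t _; rewrite -scalemxAr -scalemxAl.
Qed.

Lemma kraus_map_sum (I : finType) (F : I -> 'M[C]_n) :
  kraus_map K (\sum_i F i) = \sum_i kraus_map K (F i).
Proof.
by rewrite exchange_big; apply: eq_bigr => t _; rewrite mulmx_sumr mulmx_suml.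
Qed.

Lemma kraus_map_mulmxr (A : 'M[C]_n) X :
  kraus_map (fun t => K t *m A) X = kraus_map K (A *m X *m dag A).
Proof. by apply: eq_bigr => t _; rewrite dagM !mulmxA. Qed.

End KrausMap.

Lemma kraus_applyE (C : numClosedFieldType) n N (K : 'I_N -> 'M[C]_n) :
  kraus_apply K =1 kraus_map K.
Proof. by []. Qed.

Section Bath.
Variables (C : numClosedFieldType) (dS dB : nat).
Implicit Types (O : 'M[C]_(dS * dB)) (k l m : 'I_dB).

Lemma sum_mxtens_index (V : nmodType) (F : 'I_(dS * dB) -> V) :
  \sum_p F p = \sum_i \sum_k F (mxtens_index (i, k)).
Proof.
rewrite pair_big /= (reindex (@mxtens_index dS dB)) /=; last first.
  by exists (@mxtens_unindex dS dB) => p _; rewrite (mxtens_indexK, mxtens_unindexK).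
by apply: eq_bigr => -[i k].
Qed.

Lemma bath_elemM O1 O2 k l :
  bath_elem (O1 *m O2) k l = \sum_m bath_elem O1 k m *m bath_elem O2 m l.
Proof.
apply/matrixP => i j; rewrite !mxE sum_mxtens_index summxE exchange_big /=.
by apply: eq_bigr => m _; rewrite mxE; apply: eq_bigr => i' _; rewrite !mxE.
Qed.

Lemma bath_elem_dag O k l : bath_elem (dag O) k l = dag (bath_elem O l k).
Proof. by apply/matrixP => i j; rewrite !mxE. Qed.

Lemma bath_elemZ c O k l : bath_elem (c *: O) k l = c *: bath_elem O k l.
Proof. by apply/matrixP => i j; rewrite !mxE. Qed.

Lemma bath_elem_sum (I : finType) (F : I -> 'M[C]_(dS * dB)) k l :
  bath_elem (\sum_i F i) k l = \sum_i bath_elem (F i) k l.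
Proof.
by apply/matrixP => i j; rewrite !mxE !summxE; apply: eq_bigr => t _; rewrite mxE.
Qed.

Lemma bath_elem_tens (X : 'M[C]_dS) (Y : 'M[C]_dB) k l :
  bath_elem (tensmx X Y) k l = Y k l *: X.
Proof. by apply/matrixP => i j; rewrite mxE tensmxE mxE mulrC. Qed.

Lemma bath_elem1 k l : bath_elem (1%:M : 'M[C]_(dS * dB)) k l = (k == l)%:R%:M.
Proof.
apply/matrixP => i j; rewrite !mxE (can_eq (@mxtens_indexK dS dB)) xpair_eqE.
by case: (i == j); case: (k == l); rewrite ?mulr1n ?mulr0n.
Qed.

Lemma bath_elem_tens1_mul (X : 'M[C]_dS) O k l :
  bath_elem (tensmx X (1%:M : 'M_dB) *m O) k l = X *m bath_elem O k l.
Proof.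
rewrite bath_elemM (bigD1 k) //= big1 ?addr0 => [|m /negPf km].
  by rewrite bath_elem_tens mxE eqxx scale1r.
by rewrite bath_elem_tens mxE eq_sym km scale0r mul0mx.
Qed.

Lemma bath_elem_mul_tens1 O (X : 'M[C]_dS) k l :
  bath_elem (O *m tensmx X (1%:M : 'M_dB)) k l = bath_elem O k l *m X.
Proof.
rewrite bath_elemM (bigD1 l) //= big1 ?addr0 => [|m /negPf ml].
  by rewrite bath_elem_tens mxE eqxx scale1r.
by rewrite bath_elem_tens mxE ml scale0r mulmx0.
Qed.

Lemma bath_elem_kraus N (E : 'I_N -> 'M[C]_(dS * dB)) O k l :
  bath_elem (kraus_apply E O) k l =
  \sum_a \sum_m \sum_n
    bath_elem (E a) k m *m bath_elem O m n *m dag (bath_elem (E a) l n).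
Proof.
rewrite bath_elem_sum; apply: eq_bigr => a _.
rewrite bath_elemM; under eq_bigr do rewrite bath_elemM mulmx_suml bath_elem_dag.
by rewrite exchange_big.
Qed.

Lemma ptraceB_lift (RS : 'M[C]_dS -> 'M[C]_dS) O :
  ptraceB (lift_sys RS O) = \sum_k RS (bath_elem O k k).
Proof.
apply: eq_bigr => k _; apply/matrixP => i j.
by rewrite !mxE !mxtens_indexK.
Qed.

Lemma mxtrace_tens (A : 'M[C]_dS) (B : 'M[C]_dB) : \tr (tensmx A B) = \tr A * \tr B.
Proof.
rewrite /mxtrace sum_mxtens_index mulr_suml; apply: eq_bigr => i _.
by rewrite mulr_sumr; apply: eq_bigr => k _; rewrite tensmxE.
Qed.

End Bath.

Section CodeProjector.
Variables (C : numClosedFieldType) (n : nat) (PC : 'M[C]_n).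
Hypothesis PC_proj : orth_proj PC.

Lemma proj_idem : PC *m PC = PC. Proof. by case: PC_proj. Qed.
Lemma proj_dag : dag PC = PC. Proof. by case: PC_proj. Qed.

Lemma dag_proj_mulmx m (A : 'M[C]_(n, m)) : PC *m A = A -> dag A *m PC = dag A.
Proof. by move=> PA; rewrite -proj_dag -dagM PA. Qed.

Lemma code_opP (X : 'M[C]_n) : PC *m X *m PC = X -> PC *m X = X /\ X *m PC = X.
Proof. by move=> <-; rewrite !mulmxA proj_idem -!mulmxA proj_idem. Qed.

Hypothesis PC_neq0 : PC != 0.

Lemma mxtrace_proj_gt0 : 0 < \tr PC.
Proof. by have := mxtrace_mul_dag_gt0 PC; rewrite proj_dag proj_idem PC_neq0. Qed.

Lemma code_unit_vector : exists c : 'cV[C]_n, PC *m c = c /\ dag c *m c = 1%:M.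
Proof.
have [j PCj_neq0] : exists j, col j PC != 0.
  apply/existsP; apply: contraR PC_neq0; rewrite negb_exists => /forallP colPC0.
  apply/eqP/matrixP => i j.
  by have /matrixP/(_ i 0) := eqP (negbNE (colPC0 j)); rewrite !mxE.
set v := col j PC in PCj_neq0.
have PCv : PC *m v = v by rewrite /v colE mulmxA proj_idem.
set nu := \tr (v *m dag v).
have nu_gt0 : 0 < nu by rewrite mxtrace_mul_dag_gt0.
exists ((sqrtC nu)^-1 *: v); split; first by rewrite -scalemxAr PCv.
rewrite dagZ -scalemxAl -scalemxAr scalerA geC0_conj ?invr_ge0 ?sqrtC_ge0 ?ltW //.
rewrite -expr2 exprVn sqrtCK [dag v *m v]mx11_scalar -trace_mx11 mxtrace_mulC.
by rewrite scale_scalar_mx mulVf // gt_eqF.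
Qed.

End CodeProjector.

Section KrausFixingCode.
Variables (C : numClosedFieldType) (n : nat) (PC : 'M[C]_n).
Hypothesis PC_proj : orth_proj PC.

Lemma polarize_code m (B : 'cV[C]_n -> 'cV[C]_n -> 'M[C]_m) :
  (forall x y z, B (x + y) z = B x z + B y z) ->
  (forall x y z, B x (y + z) = B x y + B x z) ->
  (forall c x y, B (c *: x) y = c *: B x y) ->
  (forall c x y, B x (c *: y) = c^* *: B x y) ->
  (forall x, PC *m x = x -> B x x = 0) ->
  forall x y, PC *m x = x -> PC *m y = y -> B x y = 0.
Proof.
move=> BDl BDr BZl BZr B0 x y Px Py.
have Bxx := B0 x Px; have Byy := B0 y Py.
have /eqP : B (x + y) (x + y) = 0 by apply: B0; rewrite mulmxDr Px Py.
rewrite BDl !BDr Bxx Byy add0r addr0 addrC addr_eq0 => /eqP Byx.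
have : B (x + 'i *: y) (x + 'i *: y) = 0 by apply: B0; rewrite mulmxDr -scalemxAr Px Py.
rewrite BDl !BDr !BZl !BZr Bxx Byy conjCi Byx !scaler0 add0r addr0.
rewrite scalerN scaleNr -opprD -scalerDl => /eqP; rewrite oppr_eq0 scaler_eq0.
by rewrite -mulr2n mulrn_eq0 /= (negPf (neq0Ci C)) => /eqP.
Qed.

Lemma kraus_map_fix_code (T : finType) (N : T -> 'M[C]_n) :
  (forall psi : 'cV[C]_n, PC *m psi = psi ->
     kraus_map N (psi *m dag psi) = psi *m dag psi) ->
  forall X, kraus_map N (PC *m X *m PC) = PC *m X *m PC.
Proof.
move=> N_pure.
pose B (x y : 'cV[C]_n) := kraus_map N (x *m dag y) - x *m dag y.
have B0 : forall x y, PC *m x = x -> PC *m y = y -> B x y = 0.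
  apply: polarize_code => [x y z|x y z|c x y|c x y|x /N_pure]; rewrite /B.
  - by rewrite mulmxDl kraus_mapD opprD addrACA.
  - by rewrite dagD mulmxDr kraus_mapD opprD addrACA.
  - by rewrite -scalemxAl kraus_mapZ -scalerBr.
  - by rewrite dagZ -scalemxAr kraus_mapZ -scalerBr.
  - by move=> ->; rewrite subrr.
move=> X; rewrite (matrix_sum_delta X) !(mulmx_suml, mulmx_sumr, kraus_map_sum).
apply: eq_bigr => i _; rewrite !(mulmx_suml, mulmx_sumr, kraus_map_sum).
apply: eq_bigr => j _; rewrite -!scalemxAr -!scalemxAl kraus_mapZ; congr (_ *: _).
have -> : PC *m delta_mx i j *m PC = col i PC *m dag (col j PC).
  rewrite !colE dagM (proj_dag PC_proj) dag_delta mulmxA.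
  by rewrite -(mulmxA PC (delta_mx i 0)) mul_delta_mx.
by apply/eqP; rewrite -subr_eq0; apply/eqP/B0; rewrite colE mulmxA (proj_idem PC_proj).
Qed.

Lemma kraus_commute_code (T : finType) (M : T -> 'M[C]_n) :
  (forall X, kraus_map M X = PC *m X *m PC) ->
  forall X, PC *m X *m PC = X -> forall t, M t *m X = X *m M t.
Proof.
move=> M_compress X Xcode t.
have [PX XP] := code_opP PC_proj Xcode.
have XdP := dag_proj_mulmx PC_proj PX.
pose F s := M s *m X - X *m M s.
have FF s : F s *m dag (F s) =
    (M s *m (X *m dag X) *m dag (M s) - X *m (M s *m dag X *m dag (M s)))
  - (M s *m X *m dag (M s) *m dag X - X *m (M s *m 1%:M *m dag (M s)) *m dag X).
  by rewrite /F dagB !dagM mulmxBr !mulmxBl mulmx1 !mulmxA.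
(* The compressed map fixes X X^dag, X^dag, X and 1, which makes the squared
   norms of the commutators sum to zero. *)
have : \sum_s F s *m dag (F s) = 0.
  under eq_bigr do rewrite FF.
  have KM Y : \sum_s M s *m Y *m dag (M s) = PC *m Y *m PC := M_compress Y.
  rewrite !sumrB -!mulmx_sumr -!mulmx_suml -!mulmx_sumr !KM.
  by rewrite mulmx1 (proj_idem PC_proj) !mulmxA !PX !XP -!mulmxA !XdP !subrr ?subr0.
by move/sum_mul_dag_eq0/(_ t)/eqP; rewrite subr_eq0 => /eqP.
Qed.

Hypothesis PC_neq0 : PC != 0.

Lemma commute_code_scalar (M : 'M[C]_n) : M *m PC = M ->
  (forall X, PC *m X *m PC = X -> M *m X = X *m M) ->
  M = (\tr M / \tr PC) *: PC.
Proof.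
move=> MP M_comm.
have trPC_neq0 : \tr PC != 0 by rewrite gt_eqF // (mxtrace_proj_gt0 PC_proj PC_neq0).
have PM : PC *m M = M by rewrite -M_comm ?MP // !(proj_idem PC_proj).
have sandwich Y : M *m Y *m PC = PC *m Y *m M.
  have := M_comm (PC *m Y *m PC).
  rewrite !mulmxA (proj_idem PC_proj) -!mulmxA (proj_idem PC_proj).
  by rewrite !mulmxA MP -!mulmxA PM => ->.
have delta_entry (A B : 'M[C]_n) p q i j :
    (A *m delta_mx i j *m B) p q = A p i * B j q.
  by rewrite -(mul_delta_mx (0 : 'I_1)) mulmxA -colE -mulmxA -rowE mxE big_ord1 !mxE.
(* Entrywise, M E_ij P = P E_ij M reads M_pi P_jq = P_pi M_jq; take q = j. *)
apply/matrixP => p i; rewrite mxE; apply: (mulIf trPC_neq0).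
rewrite mulrAC mulfVK // mulrC !mulr_suml; apply: eq_bigr => j _.
by rewrite mulrC -delta_entry sandwich delta_entry [RHS]mulrC.
Qed.

Lemma kraus_fix_code_scalar (T : finType) (N : T -> 'M[C]_n) :
  (forall psi : 'cV[C]_n, PC *m psi = psi ->
     kraus_map N (psi *m dag psi) = psi *m dag psi) ->
  forall t, N t *m PC = (\tr (N t *m PC) / \tr PC) *: PC.
Proof.
move=> N_pure t; apply: commute_code_scalar.
  by rewrite -mulmxA (proj_idem PC_proj).
have compress X : kraus_map (fun s => N s *m PC) X = PC *m X *m PC.
  by rewrite kraus_map_mulmxr (proj_dag PC_proj) kraus_map_fix_code.
by move=> X /(kraus_commute_code compress)/(_ t).
Qed.

End KrausFixingCode.

Section Necessity.
Variables (C : numClosedFieldType) (dS dB N : nat) (PC : 'M[C]_dS).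
Variable E : 'I_N -> 'M[C]_(dS * dB).
Hypothesis PC_proj : orth_proj PC.

Lemma code_pure_state (psi : 'cV[C]_dS) (l : 'I_dB) : PC *m psi = psi -> psi != 0 ->
  code_state PC ((\tr (psi *m dag psi))^-1 *: tensmx (psi *m dag psi) (delta_mx l l)).
Proof.
move=> PCpsi psi_neq0.
have tr_gt0 : 0 < \tr (psi *m dag psi) by rewrite mxtrace_mul_dag_gt0.
set Psi := tensmx psi (delta_mx l 0 : 'cV[C]_dB).
have -> : tensmx (psi *m dag psi) (delta_mx l l) = Psi *m dag Psi.
  by rewrite dag_tens dag_delta tensmx_mul mul_delta_mx.
split; [split|].
- move=> v; rewrite -scalemxAr -scalemxAl mxE mulr_ge0 ?invr_ge0 ?(ltW tr_gt0) //.
  have -> : dag v *m (Psi *m dag Psi) *m v = (dag v *m Psi) *m dag (dag v *m Psi).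
    by rewrite dagM dagK !mulmxA.
  by rewrite -trace_mx11 mxtrace_mul_dag_ge0.
- rewrite mxtraceZ dag_tens tensmx_mul mxtrace_tens dag_delta mul_delta_mx.
  have tr_delta : \tr (delta_mx l l : 'M[C]_dB) = 1.
    rewrite /mxtrace (bigD1 l) //= big1 ?addr0 => [|i /negPf il].
      by rewrite mxE eqxx.
    by rewrite mxE il.
  by rewrite tr_delta mulr1 mulVf // gt_eqF.
- rewrite -scalemxAr -scalemxAl /Psi dag_tens !tensmx_mul mul1mx mulmx1.
  by rewrite !mulmxA PCpsi -mulmxA (dag_proj_mulmx PC_proj PCpsi).
Qed.

Hypothesis PC_neq0 : PC != 0.
Variables (L : nat) (K : 'I_L -> 'M[C]_dS).
Hypothesis K_TP : kraus_TP K.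
Variable RS : 'M[C]_dS -> 'M[C]_dS.
Hypothesis RS_kraus : forall X, RS X = kraus_apply K X.
Hypothesis correct : perfectly_correctable PC E RS.

Lemma correctable_pure (l : 'I_dB) (psi : 'cV[C]_dS) : PC *m psi = psi ->
  kraus_map (fun t : 'I_dB * 'I_N * 'I_L => K t.2 *m bath_elem (E t.1.2) t.1.1 l)
    (psi *m dag psi) = psi *m dag psi.
Proof.
move=> PCpsi; have [->|psi_neq0] := eqVneq psi 0.
  by rewrite mul0mx /kraus_map big1 // => t _; rewrite mulmx0 mul0mx.
have := correct (code_pure_state l PCpsi psi_neq0); rewrite ptraceB_lift /ptraceB.
set s := (\tr (psi *m dag psi))^-1; set rho := s *: _.
have s_neq0 : s != 0 by rewrite invr_eq0 gt_eqF // mxtrace_mul_dag_gt0.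
have rhoE m n :
    bath_elem rho m n = ((m == l) && (n == l))%:R *: (s *: (psi *m dag psi)).
  by rewrite bath_elemZ bath_elem_tens mxE scalerA mulrC -scalerA.
have rho_diag : \sum_k bath_elem rho k k = s *: (psi *m dag psi).
  rewrite (bigD1 l) //= big1 ?addr0 => [|k /negPf kl]; rewrite rhoE.
    by rewrite eqxx scale1r.
  by rewrite kl scale0r.
have out k : bath_elem (kraus_apply E rho) k k =
    s *: \sum_a bath_elem (E a) k l *m (psi *m dag psi) *m dag (bath_elem (E a) k l).
  rewrite bath_elem_kraus scaler_sumr; apply: eq_bigr => a _.
  rewrite (bigD1 l) //= [X in _ + X]big1 ?addr0 => [|m /negPf ml]; last first.
    by apply: big1 => n _; rewrite rhoE ml scale0r mulmx0 mul0mx.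
  rewrite (bigD1 l) //= [X in _ + X]big1 ?addr0 => [|n /negPf nl]; last first.
    by rewrite rhoE nl andbF scale0r mulmx0 mul0mx.
  by rewrite rhoE !eqxx scale1r -scalemxAr -scalemxAl.
rewrite rho_diag; under eq_bigr do rewrite out RS_kraus kraus_applyE kraus_mapZ.
rewrite -scaler_sumr => /(scalerI s_neq0); apply: etrans.
under [RHS]eq_bigr do rewrite kraus_map_sum.
rewrite pair_big /kraus_map pair_big; apply: eq_bigr => -[[k a] r] _ /=.
by rewrite dagM !mulmxA.
Qed.

Lemma correctable_KL_cond :
  exists Lam : 'I_N -> 'I_dB -> 'I_dB -> 'I_N -> 'I_dB -> 'I_dB -> C,
    (forall a k l b m n, Lam b m n a k l = Num.conj (Lam a k l b m n)) /\
    (forall a k l b m n,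
        PC *m dag (bath_elem (E a) k l) *m bath_elem (E b) m n *m PC
        = Lam a k l b m n *: PC).
Proof.
pose Nop l (t : 'I_dB * 'I_N * 'I_L) := K t.2 *m bath_elem (E t.1.2) t.1.1 l.
pose c l t := \tr (Nop l t *m PC) / \tr PC.
have NopP l t : Nop l t *m PC = c l t *: PC.
  exact: (kraus_fix_code_scalar PC_proj PC_neq0 (correctable_pure l)).
exists (fun a k l b m n => \sum_r (c l (k, a, r))^* * c n (m, b, r)); split.
  move=> *; rewrite rmorph_sum; apply: eq_bigr => r _.
  by rewrite rmorphM /= conjCK mulrC.
move=> a k l b m n; rewrite -(mulmxA PC).
have -> : dag (bath_elem (E a) k l) *m bath_elem (E b) m n =
    \sum_r dag (Nop l (k, a, r)) *m Nop n (m, b, r).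
  rewrite -[dag _]mulmx1 -K_TP mulmx_sumr mulmx_suml.
  by apply: eq_bigr => r _; rewrite dagM !mulmxA.
rewrite mulmx_sumr mulmx_suml scaler_suml; apply: eq_bigr => r _.
have -> : PC *m (dag (Nop l (k, a, r)) *m Nop n (m, b, r)) *m PC =
    dag (Nop l (k, a, r) *m PC) *m (Nop n (m, b, r) *m PC).
  by rewrite [dag (_ *m PC)]dagM (proj_dag PC_proj) !mulmxA.
rewrite !NopP.
by rewrite dagZ (proj_dag PC_proj) -scalemxAl -scalemxAr (proj_idem PC_proj) scalerA.
Qed.

End Necessity.

Section KrausCompletion.
Variables (C : numClosedFieldType) (n : nat) (PC : 'M[C]_n).
Hypotheses (PC_proj : orth_proj PC) (PC_neq0 : PC != 0).

Lemma kraus_completion (Pi : 'M[C]_n) : orth_proj Pi ->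
  exists K2 : 'I_n -> 'M[C]_n,
    [/\ \sum_j dag (K2 j) *m K2 j = 1%:M - Pi,
        forall j, PC *m K2 j = K2 j & forall j, K2 j *m Pi = 0].
Proof.
move=> [PiPi Pidag]; have [c [PCc cc]] := code_unit_vector PC_proj PC_neq0.
set Q := 1%:M - Pi.
have QQ : dag Q *m Q = Q.
  by rewrite dagB dag1 Pidag mulmxBl mul1mx mulmxBr mulmx1 PiPi subrr subr0.
(* Send the j-th coordinate of the complement onto the code unit vector c. *)
exists (fun j => c *m delta_mx 0 j *m Q); split.
- rewrite -[RHS]QQ -[dag Q in RHS]mulmx1 mx1_sum_delta mulmx_sumr mulmx_suml.
  apply: eq_bigr => j _; rewrite !dagM dag_delta !mulmxA -(mulmxA _ (dag c)) cc mulmx1.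
  by rewrite -(mulmxA _ (delta_mx j 0)) mul_delta_mx.
- by move=> j; rewrite !mulmxA PCc.
- by move=> j; rewrite -mulmxA /Q mulmxBl mul1mx PiPi subrr mulmx0.
Qed.

End KrausCompletion.

Section KrausCat.
Variables (C : numClosedFieldType) (n m1 m2 : nat).
Variables (K1 : 'I_m1 -> 'M[C]_n) (K2 : 'I_m2 -> 'M[C]_n).

Definition kraus_cat (t : 'I_(m1 + m2)) : 'M[C]_n :=
  match split t with inl r => K1 r | inr j => K2 j end.

Lemma sum_kraus_cat (V : nmodType) (f : 'M[C]_n -> V) :
  \sum_t f (kraus_cat t) = \sum_r f (K1 r) + \sum_j f (K2 j).
Proof.
have splitl r : split (lshift m2 r) = inl r := unsplitK (inl r).
have splitr j : split (rshift m1 j) = inr j := unsplitK (inr j).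
rewrite big_split_ord; congr (_ + _).
  by apply: eq_bigr => r _; rewrite /kraus_cat splitl.
by apply: eq_bigr => j _; rewrite /kraus_cat splitr.
Qed.

End KrausCat.

Section OrthogonalRecovery.
Variables (C : numClosedFieldType) (n m : nat) (PC : 'M[C]_n).
Hypotheses (PC_proj : orth_proj PC) (PC_neq0 : PC != 0).
Variables (G : 'I_m -> 'M[C]_n) (d : 'I_m -> C).
Hypothesis G_code : forall r, G r *m PC = G r.
Hypothesis G_orth : forall r s, dag (G r) *m G s = ((r == s)%:R * d r) *: PC.

Lemma orth_gram_diag r : dag (G r) *m G r = d r *: PC.
Proof. by rewrite G_orth eqxx mul1r. Qed.

Lemma orth_gram_ge0 r : 0 <= d r.
Proof.
have := mxtrace_mul_dag_ge0 (dag (G r)); rewrite dagK orth_gram_diag mxtraceZ.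
by rewrite pmulr_lge0 // (mxtrace_proj_gt0 PC_proj PC_neq0).
Qed.

Lemma orth_gram_eq0 r : d r = 0 -> G r = 0.
Proof.
move=> dr0; suff /(congr1 (@dag _ _ _)) : dag (G r) = 0 by rewrite dagK dag0.
by apply/eqP; rewrite -mxtrace_mul_dag_eq0 dagK orth_gram_diag dr0 scale0r mxtrace0.
Qed.

(* As 0^-1 = 0, the null directions (d r = 0) get a zero Kraus operator. *)
Let w r := (d r)^-1.

Let wdG r : (w r * d r) *: G r = G r.
Proof.
have [dr0|dr_neq0] := eqVneq (d r) 0; first by rewrite (orth_gram_eq0 dr0) scaler0.
by rewrite mulVf // scale1r.
Qed.

Let K1 r := sqrtC (w r) *: (PC *m dag (G r)).

Let K1G r s : K1 r *m G s = ((r == s)%:R * (sqrtC (w r) * d r)) *: PC.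
Proof.
rewrite -scalemxAl -mulmxA G_orth -scalemxAr (proj_idem PC_proj) scalerA.
by congr (_ *: _); ring.
Qed.

Let Pi := \sum_r dag (K1 r) *m K1 r.

Let PiG s : Pi *m G s = G s.
Proof.
rewrite mulmx_suml (bigD1 s) //= big1 ?addr0 => [|r /negPf rs]; last first.
  by rewrite -mulmxA K1G rs mul0r scale0r mulmx0.
rewrite -mulmxA K1G eqxx mul1r -scalemxAr dagZ dagM (proj_dag PC_proj) dagK -scalemxAl.
rewrite -mulmxA (proj_idem PC_proj) G_code scalerA -[RHS]wdG; congr (_ *: _).
rewrite geC0_conj ?sqrtC_ge0 ?invr_ge0 ?orth_gram_ge0 //.
by rewrite mulrAC -expr2 sqrtCK.
Qed.

Let Pi_proj : orth_proj Pi.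
Proof.
split; last by rewrite dag_sum; apply: eq_bigr => r _; rewrite dagM dagK.
rewrite {2}/Pi mulmx_sumr; apply: eq_bigr => r _.
by rewrite /K1 dagZ dagM dagK -!scalemxAr -scalemxAl -!scalemxAr !mulmxA PiG.
Qed.

Lemma orthogonal_recovery :
  exists L (K : 'I_L -> 'M[C]_n),
    [/\ kraus_TP K, forall t, PC *m K t = K t &
        forall r s X, PC *m X *m PC = X ->
          kraus_apply K (G r *m X *m dag (G s)) = ((r == s)%:R * d r) *: X].
Proof.
have [K2 [K2_TP PCK2 K2Pi]] := kraus_completion PC_proj PC_neq0 Pi_proj.
have K2G j r : K2 j *m G r = 0 by rewrite -PiG mulmxA K2Pi mul0mx.
exists (m + n)%N, (kraus_cat K1 K2); split.
- by rewrite /kraus_TP (sum_kraus_cat _ _ (fun K => dag K *m K)) K2_TP addrC subrK.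
- move=> t; rewrite /kraus_cat; case: (split t) => // r.
  by rewrite /K1 -scalemxAr mulmxA (proj_idem PC_proj).
move=> r s X Xcode; rewrite kraus_applyE /kraus_map.
rewrite (sum_kraus_cat _ _ (fun K => K *m (G r *m X *m dag (G s)) *m dag K)) /=.
rewrite [X in _ + X]big1 ?addr0 => [|j _]; last by rewrite !mulmxA K2G !mul0mx.
have termE t : K1 t *m (G r *m X *m dag (G s)) *m dag (K1 t) =
    ((t == r)%:R * (t == s)%:R * (w t * d t * d t)) *: X.
  rewrite !mulmxA K1G -mulmxA -dagM K1G dagZ (proj_dag PC_proj).
  rewrite -scalemxAr -!scalemxAl Xcode scalerA; congr (_ *: _).
  rewrite !rmorphM /= conjC_nat !geC0_conj ?sqrtC_ge0 ?invr_ge0 ?orth_gram_ge0 //.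
  by set b := sqrtC (w t); rewrite -(sqrtCK (w t)) -/b; ring.
under eq_bigr do rewrite termE.
rewrite (bigD1 r) //= big1 ?addr0 => [|t /negPf tr]; last by rewrite tr !mul0r scale0r.
rewrite eqxx mul1r eq_sym; congr (_ *: _).
have [->|dr_neq0] := eqVneq (d r) 0; first by rewrite !mulr0.
by rewrite mulVf // mul1r.
Qed.

End OrthogonalRecovery.

Lemma hermitian_unitary_diag (C : numClosedFieldType) p (A : 'M[C]_p) :
  A \is hermsymmx -> exists (U : 'M[C]_p) (d : 'rV[C]_p),
    [/\ U *m dag U = 1%:M, dag U *m U = 1%:M & A = dag U *m diag_mx d *m U].
Proof.
move=> A_herm; have /orthomx_spectralP := hermitian_normalmx A_herm.
have U_unitary := spectral_unitarymx A.
have dagU : invmx (spectralmx A) = dag (spectralmx A).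
  by rewrite invmx_unitary //; apply/matrixP => i j; rewrite !mxE.
exists (spectralmx A), (spectral_diag A); rewrite -dagU; split => //.
- by rewrite mulmxV ?spectral_unit.
- by rewrite mulVmx ?spectral_unit.
Qed.

Section GramRecovery.
Variables (C : numClosedFieldType) (n : nat) (PC : 'M[C]_n) (T : finType).
Hypotheses (PC_proj : orth_proj PC) (PC_neq0 : PC != 0).
Variables (F : T -> 'M[C]_n) (Lam : T -> T -> C).
Hypothesis F_code : forall i, F i *m PC = F i.
Hypothesis Lam_herm : forall i j, Lam j i = (Lam i j)^*.
Hypothesis F_gram : forall i j, dag (F i) *m F j = Lam i j *: PC.

Lemma gram_recovery :
  exists L (K : 'I_L -> 'M[C]_n),
    [/\ kraus_TP K, forall t, PC *m K t = K t &
        forall i j X, PC *m X *m PC = X ->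
          kraus_apply K (F i *m X *m dag (F j)) = Lam j i *: X].
Proof.
pose A : 'M[C]_#|T| := \matrix_(p, q) Lam (enum_val p) (enum_val q).
have A_herm : A \is hermsymmx.
  apply/is_hermitianmxP; rewrite expr0 scale1r.
  by apply/matrixP => p q; rewrite !mxE Lam_herm.
have [U [d [UU' U'U Aeq]]] := hermitian_unitary_diag A_herm.
pose G r := \sum_p (U r p)^* *: F (enum_val p).
have G_code r : G r *m PC = G r.
  by rewrite mulmx_suml; apply: eq_bigr => p _; rewrite -scalemxAl F_code.
have G_orth r s : dag (G r) *m G s = ((r == s)%:R * d 0 r) *: PC.
  have -> : (r == s)%:R * d 0 r = (U *m A *m dag U) r s.
    by rewrite Aeq !mulmxA UU' mul1mx -mulmxA UU' mulmx1 mxE mulr_natl.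
  rewrite dag_sum mulmx_suml; under eq_bigr do rewrite mulmx_sumr.
  rewrite exchange_big /= mxE scaler_suml; apply: eq_bigr => q _.
  rewrite mxE mulr_suml scaler_suml; apply: eq_bigr => p _.
  rewrite dagZ -scalemxAr -scalemxAl F_gram !scalerA !mxE conjCK; congr (_ *: _).
  by ring.
have F_G i : F i = \sum_r U r (enum_rank i) *: G r.
  transitivity (\sum_p (dag U *m U) p (enum_rank i) *: F (enum_val p)).
    rewrite U'U (bigD1 (enum_rank i)) //= big1 ?addr0 => [|p /negPf pi]; last first.
      by rewrite mxE pi scale0r.
    by rewrite mxE eqxx scale1r enum_rankK.
  under [RHS]eq_bigr do rewrite scaler_sumr.
  rewrite exchange_big /=; apply: eq_bigr => p _.
  by rewrite mxE scaler_suml; apply: eq_bigr => r _; rewrite scalerA !mxE mulrC.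
have [L [K [K_TP PCK KG]]] := orthogonal_recovery PC_proj PC_neq0 G_code G_orth.
exists L, K; split => // i j X Xcode.
rewrite !F_G dag_sum !mulmx_suml kraus_applyE kraus_map_sum.
under eq_bigr do rewrite mulmx_sumr kraus_map_sum.
under eq_bigr do under eq_bigr do
  rewrite dagZ -!scalemxAl -!scalemxAr !kraus_mapZ -kraus_applyE (KG _ _ _ Xcode).
have -> : Lam j i = A (enum_rank j) (enum_rank i) by rewrite mxE !enum_rankK.
rewrite Aeq mxE scaler_suml; apply: eq_bigr => r _.
rewrite (bigD1 r) //= big1 ?addr0 => [|s /negPf sr]; last first.
  by rewrite eq_sym sr mul0r scale0r !scaler0.
by rewrite eqxx mul1r mul_mx_diag !mxE !scalerA; congr (_ *: _); ring.
Qed.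

End GramRecovery.

Lemma scalev_inj (R : fieldType) (V : lmodType R) (v : V) :
  v != 0 -> injective ( *:%R^~ v : R -> V).
Proof.
move=> v_neq0 a b /eqP; rewrite -subr_eq0 -scalerBl scaler_eq0 (negPf v_neq0) orbF.
by rewrite subr_eq0 => /eqP.
Qed.

Section Sufficiency.
Variables (C : numClosedFieldType) (dS dB N : nat) (PC : 'M[C]_dS).
Variable E : 'I_N -> 'M[C]_(dS * dB).
Hypotheses (PC_proj : orth_proj PC) (PC_neq0 : PC != 0) (E_TP : kraus_TP E).
Variable Lam : 'I_N -> 'I_dB -> 'I_dB -> 'I_N -> 'I_dB -> 'I_dB -> C.
Hypothesis Lam_herm : forall a k l b m n, Lam b m n a k l = Num.conj (Lam a k l b m n).
Hypothesis E_KL : forall a k l b m n,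
  PC *m dag (bath_elem (E a) k l) *m bath_elem (E b) m n *m PC = Lam a k l b m n *: PC.

Lemma KL_sum_diag m n : \sum_k \sum_a Lam a k n a k m = (n == m)%:R.
Proof.
apply: (scalev_inj PC_neq0) => /=.
have -> : (n == m)%:R *: PC = PC *m bath_elem (\sum_a dag (E a) *m E a) n m *m PC.
  by rewrite E_TP bath_elem1 mul_mx_scalar -scalemxAl (proj_idem PC_proj).
rewrite bath_elem_sum mulmx_sumr mulmx_suml exchange_big scaler_suml /=.
apply: eq_bigr => a _; rewrite bath_elemM mulmx_sumr mulmx_suml scaler_suml.
by apply: eq_bigr => k _; rewrite bath_elem_dag mulmxA E_KL.
Qed.

Lemma KL_correctable :
  exists RS : 'M[C]_dS -> 'M[C]_dS, sys_recovery PC RS /\ perfectly_correctable PC E RS.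
Proof.
pose F (t : 'I_N * 'I_dB * 'I_dB) := bath_elem (E t.1.1) t.1.2 t.2 *m PC.
pose LamF (s t : 'I_N * 'I_dB * 'I_dB) := Lam s.1.1 s.1.2 s.2 t.1.1 t.1.2 t.2.
have F_code t : F t *m PC = F t by rewrite -mulmxA (proj_idem PC_proj).
have F_gram s t : dag (F s) *m F t = LamF s t *: PC.
  by rewrite dagM (proj_dag PC_proj) !mulmxA E_KL.
have [L [K [K_TP PCK KF]]] :=
  gram_recovery PC_proj PC_neq0 F_code (fun s t => Lam_herm _ _ _ _ _ _) F_gram.
exists (kraus_apply K); split.
  split=> [|X]; first by exists L, K.
  rewrite mulmx_sumr mulmx_suml; apply: eq_bigr => t _.
  by rewrite !mulmxA PCK -[RHS]mulmxA (dag_proj_mulmx PC_proj (PCK t)).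
move=> rho [_ rho_code].
have rho_code_blk m n : PC *m bath_elem rho m n *m PC = bath_elem rho m n.
  by rewrite [in RHS]rho_code bath_elem_mul_tens1 bath_elem_tens1_mul.
have recovered a k m n : kraus_apply K
    (bath_elem (E a) k m *m bath_elem rho m n *m dag (bath_elem (E a) k n)) =
    Lam a k n a k m *: bath_elem rho m n.
  rewrite -(KF (a, k, m) (a, k, n)) ?rho_code_blk //.
  by rewrite -{1}rho_code_blk /F dagM (proj_dag PC_proj) !mulmxA.
have recovered_sum k a : kraus_apply K (\sum_m \sum_n
      bath_elem (E a) k m *m bath_elem rho m n *m dag (bath_elem (E a) k n)) =
    \sum_m \sum_n Lam a k n a k m *: bath_elem rho m n.
  rewrite kraus_applyE kraus_map_sum; apply: eq_bigr => m _.
  by rewrite kraus_map_sum; apply: eq_bigr => n _; rewrite -kraus_applyE recovered.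
rewrite ptraceB_lift /ptraceB.
under eq_bigr do rewrite bath_elem_kraus kraus_applyE kraus_map_sum.
under eq_bigr do under eq_bigr do rewrite -kraus_applyE recovered_sum.
transitivity (\sum_m \sum_n (\sum_k \sum_a Lam a k n a k m) *: bath_elem rho m n).
  under eq_bigr do rewrite exchange_big.
  under eq_bigr do under eq_bigr do rewrite exchange_big.
  rewrite exchange_big; under eq_bigr do rewrite exchange_big.
  apply: eq_bigr => m _; apply: eq_bigr => n _.
  by rewrite scaler_suml; apply: eq_bigr => k _; rewrite scaler_suml.
apply: eq_bigr => m _; under eq_bigr do rewrite KL_sum_diag.
rewrite (bigD1 m) //= big1 ?addr0 ?eqxx ?scale1r // => n /negPf nm.
by rewrite nm scale0r.
Qed.

End Sufficiency.

Theorem theorem1 (R : realType) (dS dB N : nat) (PC : 'M[R[i]]_dS)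
    (E : 'I_N -> 'M[R[i]]_(dS * dB)) :
  orth_proj PC -> PC != 0 -> kraus_TP E ->
  (exists RS : 'M[R[i]]_dS -> 'M[R[i]]_dS,
      sys_recovery PC RS /\ perfectly_correctable PC E RS)
  <->
  (exists Lam : 'I_N -> 'I_dB -> 'I_dB -> 'I_N -> 'I_dB -> 'I_dB -> R[i],
      (forall a k l b m n, Lam b m n a k l = Num.conj (Lam a k l b m n)) /\
      (forall a k l b m n,
          PC *m dag (bath_elem (E a) k l) *m bath_elem (E b) m n *m PC
          = Lam a k l b m n *: PC)).
Proof.
move=> PC_proj PC_neq0 E_TP; split.
  move=> [RS [[[L [K [K_TP RS_kraus]]] _] correct]].
  by have := correctable_KL_cond PC_proj PC_neq0 K_TP RS_kraus correct.
move=> [Lam [Lam_herm E_KL]].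
by have := KL_correctable PC_proj PC_neq0 E_TP Lam_herm E_KL.
Qed.
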